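(* Let $X_1,X_2$ be connected graphs, each with at least two vertices, $X=X_1\square X_2$, and let $F_{-2}$ be the orthogonal projection onto the $(-2)$-eigenspace of the adjacency matrix of $\mathcal L(X)$. Let $\varepsilon_1\neq\varepsilon_2$ be edges of $X$. Then $F_{-2}\mathbf h_{\varepsilon_1}=\pm F_{-2}\mathbf h_{\varepsilon_2}$ (for some sign) if and only if, up to interchanging the roles of $X_1$ and $X_2$ and of $\varepsilon_1,\varepsilon_2$, one of the following holds: (i) $X_2=K_2$ with $V(X_2)=\{1,2\}$, and there is an edge $\{a,b\}$ of $X_1$ with $-2\notin\Lambda_{\mathbf f_{ab}}$ such that $\varepsilon_1$ joins $(a,1)$ and $(b,1)$ and $\varepsilon_2$ joins $(a,2)$ and $(b,2)$; (ii) there are a pendant vertex $a$ of $X_1$ with its edge $\{a,b\}\in E(X_1)$ and a pendant vertex $\alpha$ of $X_2$ with its edge $\{\alpha,\beta\}\in E(X_2)$, with $-2\notin\Lambda_{\mathbf f_{ab}}$ and $-2\notin\Lambda_{\mathbf f_{\alpha\beta}}$, such that $\varepsilon_1$ joins $(a,\alpha)$ and $(a,\beta)$ and $\varepsilon_2$ joins $(a,\alpha)$ and $(b,\alpha)$. Moreover, in case (i) $F_{-2}\mathbf h_{\varepsilon_1}=F_{-2}\mathbf h_{\varepsilon_2}\ne\mathbf 0$, and in case (ii) $F_{-2}\mathbf h_{\varepsilon_1}=-F_{-2}\mathbf h_{\varepsilon_2}\neq\mathbf 0$.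
   Context: $X_1\square X_2$ is the Cartesian product: vertex set $V(X_1)\times V(X_2)$, with $(x,y)\sim(x',y')$ iff ($x=x'$ and $y\sim y'$) or ($y=y'$ and $x\sim x'$). The line graph $\mathcal L(Y)$ has vertex set $E(Y)$, edges adjacent iff they share an endpoint. For an edge $\varepsilon$ of $X$, $\mathbf h_\varepsilon$ is the standard basis vector of the corresponding vertex of $\mathcal L(X)$. For $\{a,b\}\in E(X_j)$, $\mathbf f_{ab}$ is the vertex state of $\mathcal L(X_j)$ and $\Lambda_{\mathbf f_{ab}}$ its eigenvalue support with respect to the adjacency matrix of $\mathcal L(X_j)$ (set of eigenvalues $\theta$ whose spectral projection does not annihilate $\mathbf f_{ab}$). A pendant vertex is a vertex of degree one. *)

From HB Require Import structures.
From mathcomp Require Import all_boot all_order all_algebra.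
From mathcomp Require Import reals.
Set Implicit Arguments. Unset Strict Implicit. Unset Printing Implicit Defensive.
Import Order.TTheory GRing.Theory Num.Theory.
Local Open Scope ring_scope.

(* A finite simple graph is a symmetric irreflexive relation g on a finType. *)
Definition connectedg (T : finType) (g : rel T) : Prop := forall x y, connect g x y.

Definition deg (T : finType) (g : rel T) (x : T) : nat := #|[set y | g x y]|.
Definition pendant (T : finType) (g : rel T) (x : T) : bool := deg g x == 1%N.

Definition is_edgeb (T : finType) (g : rel T) (e : {set T}) : bool :=
  [exists x, exists y, g x y && (e == [set x; y])].
Definition edge_of (T : finType) (g : rel T) := {e : {set T} | is_edgeb g e}.

Definition cart_adj (T1 T2 : finType) (g1 : rel T1) (g2 : rel T2) : rel (T1 * T2) :=
  fun u v => ((u.1 == v.1) && g2 u.2 v.2) || ((u.2 == v.2) && g1 u.1 v.1).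

Definition line_adj (T : finType) (g : rel T) : rel (edge_of g) :=
  fun e f => (e != f) && [exists x, (x \in val e) && (x \in val f)].
Arguments line_adj {T} g.

Definition adjmx (R : realType) (V : finType) (r : rel V) : 'M[R]_#|V| :=
  \matrix_(i, j) (r (enum_val i) (enum_val j))%:R.

Definition vstate (R : realType) (V : finType) (v : V) : 'rV[R]_#|V| :=
  delta_mx 0 (enum_rank v).

(* orthogonal projection onto the row space of W (acting on row vectors by v *m P):
   P = B^T (B B^T)^{-1} B with B a basis of the row space of W *)
Definition orthproj (R : realType) (n : nat) (W : 'M[R]_n) : 'M[R]_n :=
  let B := row_base W in B^T *m invmx (B *m B^T) *m B.

Definition eigproj (R : realType) (n : nat) (A : 'M[R]_n) (theta : R) : 'M[R]_n :=
  orthproj (eigenspace A theta).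

Definition in_eig_support (R : realType) (n : nat) (A : 'M[R]_n) (v : 'rV[R]_n) (theta : R) : bool :=
  eigenvalue A theta && (v *m eigproj A theta != 0).

Definition Fm2 (R : realType) (T : finType) (g : rel T) (e : edge_of g) : 'rV[R]_#|{: edge_of g}| :=
  vstate R e *m eigproj (adjmx R (line_adj g)) (-2).

Definition m2_notin_supp (R : realType) (T : finType) (g : rel T) (e : edge_of g) : bool :=
  ~~ in_eig_support (adjmx R (line_adj g)) (vstate R e) (-2).

Definition case_i (R : realType) (T1 T2 : finType) (g1 : rel T1) (g2 : rel T2)
  (e1 e2 : edge_of (cart_adj g1 g2)) : Prop :=
  #|T2| = 2%N /\
  exists (p q : T2) (a b : T1) (f : edge_of g1),
    [/\ p != q, val f = [set a; b], m2_notin_supp R f,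
        val e1 = [set (a, p); (b, p)] & val e2 = [set (a, q); (b, q)]].

Definition case_i' (R : realType) (T1 T2 : finType) (g1 : rel T1) (g2 : rel T2)
  (e1 e2 : edge_of (cart_adj g1 g2)) : Prop :=
  #|T1| = 2%N /\
  exists (p q : T1) (a b : T2) (f : edge_of g2),
    [/\ p != q, val f = [set a; b], m2_notin_supp R f,
        val e1 = [set (p, a); (p, b)] & val e2 = [set (q, a); (q, b)]].

Definition case_ii (R : realType) (T1 T2 : finType) (g1 : rel T1) (g2 : rel T2)
  (e1 e2 : edge_of (cart_adj g1 g2)) : Prop :=
  exists (a b : T1) (al be : T2) (f1 : edge_of g1) (f2 : edge_of g2),
    [/\ pendant g1 a /\ pendant g2 al, val f1 = [set a; b], val f2 = [set al; be],
        m2_notin_supp R f1 /\ m2_notin_supp R f2 &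
        val e1 = [set (a, al); (a, be)] /\ val e2 = [set (a, al); (b, al)]].

Definition case_ii' (R : realType) (T1 T2 : finType) (g1 : rel T1) (g2 : rel T2)
  (e1 e2 : edge_of (cart_adj g1 g2)) : Prop :=
  exists (a b : T2) (al be : T1) (f1 : edge_of g2) (f2 : edge_of g1),
    [/\ pendant g2 a /\ pendant g1 al, val f1 = [set a; b], val f2 = [set al; be],
        m2_notin_supp R f1 /\ m2_notin_supp R f2 &
        val e1 = [set (al, a); (be, a)] /\ val e2 = [set (al, a); (al, b)]].

Definition case_i_sym R T1 T2 g1 g2 (e1 e2 : edge_of (@cart_adj T1 T2 g1 g2)) : Prop :=
  case_i R e1 e2 \/ case_i R e2 e1 \/ case_i' R e1 e2 \/ case_i' R e2 e1.
Definition case_ii_sym R T1 T2 g1 g2 (e1 e2 : edge_of (@cart_adj T1 T2 g1 g2)) : Prop :=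
  case_ii R e1 e2 \/ case_ii R e2 e1 \/ case_ii' R e1 e2 \/ case_ii' R e2 e1.

(* For a graph Y with vertex-edge incidence matrix N, A(L(Y)) + 2 I = N^T N, so the
   (-2)-eigenspace of L(Y) is the space of balanced weightings of the edges of Y: those
   whose sum over the edges at every vertex vanishes.  Hence F_{-2} h_{e1} = s F_{-2} h_{e2}
   iff k e1 = s * k e2 for every balanced k, and -2 is outside the support of f_{ab} iff
   every balanced weighting vanishes on ab.
   In X1 □ X2 every edge lies on 4-cycles, and the alternating weighting of a 4-cycle is
   balanced.  This makes F_{-2} h_e nonzero; and if e1, e2 are proportional, testing
   against all 4-cycles through e1 puts e2 on each of them, which forces the pendant
   vertices of (i) and (ii).  Lifting a balanced weighting of a factor to one of its copies
   gives the support conditions.  Conversely, in case (ii) the vertex (a, alpha) has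
   degree 2, and in case (i) the difference of the two copies of a balanced weighting of
   X is a balanced weighting of X1. *)

From HB Require Import structures.
From mathcomp Require Import all_boot all_order all_algebra.
From mathcomp Require Import reals.
From mathcomp Require Import ring lra.
Set Implicit Arguments. Unset Strict Implicit. Unset Printing Implicit Defensive.
Import Order.TTheory GRing.Theory Num.Theory.
Local Open Scope ring_scope.

Lemma mulmx_trmx_eq0 (R : realDomainType) m n (X : 'M[R]_(m, n)) :
  X *m X^T = 0 -> X = 0.
Proof.
move=> XXt0; apply/matrixP => i j; rewrite mxE.
have /eqP := congr1 (fun M : 'M_m => M i i) XXt0; rewrite !mxE.
under eq_bigr do rewrite mxE -expr2.
rewrite psumr_eq0 => [/allP/(_ j (mem_index_enum _))|k _]; last exact: sqr_ge0.
by rewrite /= sqrf_eq0 => /eqP.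
Qed.

Lemma orthproj_eq0P (R : realType) n (W : 'M[R]_n) (v : 'rV[R]_n) :
  v *m orthproj W = 0 <->
  (forall w : 'rV[R]_n, (w <= W)%MS -> \sum_i v 0 i * w 0 i = 0).
Proof.
rewrite /orthproj; set B := row_base W.
have eqBW : (B :=: W)%MS by exact: eq_row_base.
have freeB : row_free B by exact: row_base_free.
clearbody B.
have unitBBt : B *m B^T \in unitmx.
  rewrite -row_free_unit -kermx_eq0; apply/eqP; set K := kermx (B *m B^T).
  have : (K *m B) *m (K *m B)^T = 0.
    by rewrite trmx_mul mulmxA -(mulmxA K) mulmx_ker mul0mx.
  by move/mulmx_trmx_eq0/eqP; rewrite mulmx_free_eq0 // => /eqP.
have -> : v *m (B^T *m invmx (B *m B^T) *m B) = 0 <-> v *m B^T = 0.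
  split=> [vP0 | vBt0]; last by rewrite !mulmxA vBt0 !mul0mx.
  have := congr1 (mulmx^~ B^T) vP0.
  by rewrite mul0mx -!mulmxA mulVmx // mulmx1.
have dotE (w : 'rV[R]_n) : \sum_i v 0 i * w 0 i = (v *m w^T) 0 0.
  by rewrite mxE; apply: eq_bigr => i _; rewrite mxE.
split=> [vBt0 w | orth].
  rewrite -eqBW dotE => /mulmxKpV <-.
  by rewrite trmx_mul mulmxA vBt0 mul0mx mxE.
apply/rowP => i; rewrite [RHS]mxE mxE -[RHS](orth (row i B)); last first.
  by rewrite -eqBW row_sub.
by apply: eq_bigr => j _; rewrite !mxE.
Qed.

Section SimpleGraph.
Variables (T : finType) (g : rel T).
Hypotheses (sym : symmetric g) (irr : irreflexive g).

Lemma adj_neq x y : g x y -> x != y.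
Proof. by apply: contraTneq => ->; rewrite irr. Qed.

Lemma edgeP (e : edge_of g) : exists x y, g x y /\ val e = [set x; y].
Proof.
case: e => s /= /existsP [x /existsP [y /andP [gxy /eqP ->]]].
by exists x, y.
Qed.

Lemma is_edgeb_set2 x y : g x y -> is_edgeb g [set x; y].
Proof.
by move=> gxy; apply/existsP; exists x; apply/existsP; exists y; rewrite gxy eqxx.
Qed.

Definition mkedge x y (gxy : g x y) : edge_of g := exist _ [set x; y] (is_edgeb_set2 gxy).

Lemma card_edge (e : edge_of g) : #|val e| = 2%N.
Proof. by have [x [y [/adj_neq xy ->]]] := edgeP e; rewrite cards2 xy. Qed.

Lemma card_edgeI_le1 (e f : edge_of g) : f != e -> (#|val e :&: val f| <= 1)%N.
Proof.
apply: contraNT; rewrite -ltnNge => two_common.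
have eq_common (h : edge_of g) : val e :&: val f \subset val h -> val h = val e :&: val f.
  by move=> sub; apply/eqP; rewrite eq_sym eqEcard sub card_edge.
apply/eqP/val_inj.
exact: etrans (eq_common f (subsetIr _ _)) (esym (eq_common e (subsetIl _ _))).
Qed.

Lemma edge_set2_adj (f : edge_of g) a b : val f = [set a; b] -> g a b.
Proof.
move=> fab; have ab : a != b.
  by apply/eqP => eq_ab; have := card_edge f; rewrite fab eq_ab setUid cards1.
have [x [y [gxy exy]]] := edgeP f.
have : (a \in [set x; y]) && (b \in [set x; y]) by rewrite -exy fab !inE !eqxx orbT.
rewrite !inE; case/andP=> /orP[]/eqP ea /orP[]/eqP eb; move: ab;
  by rewrite ea eb ?eqxx // sym.
Qed.

Lemma edge_through (f : edge_of g) w :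
  w \in val f -> exists2 z, g w z & val f = [set w; z].
Proof.
have [x [y [gxy ->]]] := edgeP f.
by rewrite !inE => /orP [] /eqP ->; [exists y | exists x; rewrite 1?sym // setUC].
Qed.

Lemma pendant_adj_eq x y z : pendant g x -> g x y -> g x z -> y = z.
Proof.
rewrite /pendant /deg => /cards1P [w xN] gxy gxz.
have : y \in [set y | g x y] by rewrite inE.
have : z \in [set y | g x y] by rewrite inE.
by rewrite xN !inE => /eqP -> /eqP ->.
Qed.

Lemma pendant_of_adj x y : g x y -> (forall z, g x z -> z = y) -> pendant g x.
Proof.
move=> gxy uniq_y; apply/cards1P; exists y; apply/setP => z.
by rewrite !inE; apply/idP/eqP => [/uniq_y | ->].
Qed.

Lemma pendant_of_proj (T' : finType) (p : T' -> T) (V : {set T'}) x y :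
  g x y ->
  (forall z, g x z -> (exists2 u, u \in V & p u = z) /\ {in V, forall u, p u \in [set x; z]}) ->
  pendant g x.
Proof.
move=> gxy projV; apply: (pendant_of_adj gxy) => z gxz.
have [[u uV puz] _] := projV z gxz; have [_ /(_ u uV)] := projV y gxy.
rewrite puz !inE => /orP [/eqP zx | /eqP //].
by move: gxz; rewrite zx irr.
Qed.

Lemma connected_adj : connectedg g -> (1 < #|T|)%N -> forall x, exists y, g x y.
Proof.
move=> conn two x.
have [y] : exists y, y \in [set~ x].
  by apply/set0Pn; rewrite -card_gt0 cardsC1; case: #|T| two => [|[|]].
rewrite !inE => yx.
have /connectP [[|z p] /= pth yl] := conn x y; first by rewrite yl eqxx in yx.
by exists z; case/andP: pth.
Qed.

Lemma card_pendant_edge a b : connectedg g ->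
  g a b -> pendant g a -> pendant g b -> #|T| = 2%N.
Proof.
move=> conn gab pa pb; have gba : g b a by rewrite sym.
have in_ab x y : g x y -> (x == a) || (x == b) -> (y == a) || (y == b).
  move=> gxy /orP [] /eqP xab; move: gxy; rewrite xab => gxy.
    by rewrite (pendant_adj_eq pa gxy gab) eqxx orbT.
  by rewrite (pendant_adj_eq pb gxy gba) eqxx.
have ab_closed : closed g (fun z => (z == a) || (z == b)).
  by move=> x y gxy; apply/idP/idP; apply: in_ab; rewrite // sym.
have all_ab z : (z == a) || (z == b).
  by have := closed_connect ab_closed (conn a z); rewrite !unfold_in /= eqxx => <-.
rewrite -cardsT (_ : [set: T] = [set a; b]) ?cards2 ?adj_neq //.
by apply/setP => z; rewrite !inE all_ab.
Qed.

End SimpleGraph.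

Lemma sumr_mem_card (R : pzSemiRingType) (T : finType) (A B : {set T}) :
  \sum_(u in A) ((u \in B)%:R : R) = #|A :&: B|%:R.
Proof.
rewrite -sum1_card natr_sum big_mkcond [RHS]big_mkcond /=.
by apply: eq_bigr => u _; rewrite inE; case: (u \in A); case: (u \in B).
Qed.

Lemma sum_ord_enum_rank (R : nmodType) (V : finType) (F : 'I_#|{: V}| -> R) :
  \sum_i F i = \sum_(v : V) F (enum_rank v).
Proof.
by rewrite (reindex enum_rank) //; exists enum_val => x _; rewrite ?enum_rankK ?enum_valK.
Qed.

Section BalancedWeightings.
Variables (R : realType) (T : finType) (g : rel T).
Hypothesis irr : irreflexive g.

Definition vsum (k : edge_of g -> R) u : R := \sum_(f : edge_of g | u \in val f) k f.

Definition balanced (k : edge_of g -> R) := forall u, vsum k u = 0.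

Definition balanced_ratio (e1 e2 : edge_of g) (s : R) :=
  forall k, balanced k -> k e1 = s * k e2.

Definition weight_row (k : edge_of g -> R) : 'rV[R]_#|{: edge_of g}| :=
  \row_i k (enum_val i).

Lemma weight_rowE k f : weight_row k 0 (enum_rank f) = k f.
Proof. by rewrite mxE enum_rankK. Qed.

Lemma weight_row_entries (w : 'rV[R]_#|{: edge_of g}|) :
  weight_row (fun f => w 0 (enum_rank f)) = w.
Proof. by apply/rowP => i; rewrite mxE enum_valK. Qed.

(* Entrywise form of A(L(g)) + 2 I = N^T N, N the vertex-edge incidence matrix. *)
Lemma line_adj_incidence (f e : edge_of g) :
  (line_adj g f e)%:R + (f == e)%:R * 2 = \sum_(u in val e) ((u \in val f)%:R : R).
Proof.
rewrite sumr_mem_card; have [-> | nfe] := eqVneq f e.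
  by rewrite /line_adj eqxx /= setIid card_edge // mul1r add0r.
rewrite mul0r addr0 /line_adj nfe /=; congr (_%:R).
have := card_edgeI_le1 irr nfe.
case: existsP => [[x /andP [xf xe]] | no_common].
  suff : (0 < #|val e :&: val f|)%N by case: #|_| => [|[|]].
  by rewrite card_gt0; apply/set0Pn; exists x; rewrite inE xe.
suff -> : val e :&: val f = set0 by rewrite cards0.
apply/setP => x; rewrite !inE; apply/negP => /andP [xe xf].
by apply: no_common; exists x; rewrite xe xf.
Qed.

Lemma balanced_entry k (e : edge_of g) :
  (weight_row k *m (adjmx R (line_adj g) - (-2)%:M)) 0 (enum_rank e)
  = \sum_(u in val e) vsum k u.
Proof.
rewrite mxE sum_ord_enum_rank.
under eq_bigr => f _ do rewrite !mxE !enum_rankK (inj_eq enum_rank_inj) mulNrn opprK.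
transitivity (\sum_(f : edge_of g) k f * \sum_(u in val e) ((u \in val f)%:R : R)).
  apply: eq_bigr => f _; rewrite -line_adj_incidence.
  by case: (f == e); rewrite ?mul1r ?mul0r.
under eq_bigr do rewrite mulr_sumr.
rewrite exchange_big /=; apply: eq_bigr => u _.
rewrite /vsum [RHS]big_mkcond /=; apply: eq_bigr => f _.
by case: (u \in val f); rewrite ?mulr1 ?mulr0.
Qed.

Lemma sum_vsum_sqr k :
  \sum_u vsum k u ^+ 2 = \sum_(f : edge_of g) k f * \sum_(u in val f) vsum k u.
Proof.
transitivity (\sum_u \sum_(f : edge_of g) (u \in val f)%:R * (k f * vsum k u)).
  apply: eq_bigr => u _; rewrite expr2 {1}/vsum big_distrl [LHS]big_mkcond /=.
  by apply: eq_bigr => f _; case: (u \in val f); rewrite ?mul1r ?mul0r.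
rewrite exchange_big /=; apply: eq_bigr => f _; rewrite mulr_sumr [RHS]big_mkcond /=.
by apply: eq_bigr => u _; case: (u \in val f); rewrite ?mul1r ?mul0r ?mulr0.
Qed.

Lemma balancedP k :
  weight_row k *m (adjmx R (line_adj g) - (-2)%:M) = 0 <-> balanced k.
Proof.
split=> [kM0 | bal_k]; last first.
  apply/rowP => j; rewrite [RHS]mxE -(enum_valK j) balanced_entry.
  by apply: big1 => u _; apply: bal_k.
have sum_e0 (e : edge_of g) : \sum_(u in val e) vsum k u = 0.
  by rewrite -balanced_entry kM0 mxE.
have /eqP : \sum_u vsum k u ^+ 2 = 0.
  by rewrite sum_vsum_sqr big1 // => f _; rewrite sum_e0 mulr0.
rewrite psumr_eq0 => [/allP all0 u | u _]; last exact: sqr_ge0.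
by have /= := all0 u (mem_index_enum _); rewrite sqrf_eq0 => /eqP.
Qed.

Lemma dot_vstate (e : edge_of g) (w : 'rV[R]_#|{: edge_of g}|) :
  \sum_i (vstate R e) 0 i * w 0 i = w 0 (enum_rank e).
Proof.
rewrite (bigD1 (enum_rank e)) //= big1 ?addr0 => [|i /negPf ne].
  by rewrite mxE !eqxx mul1r.
by rewrite mxE ne andbF mul0r.
Qed.

Lemma Fm2_eq0P (v : 'rV[R]_#|{: edge_of g}|) :
  v *m eigproj (adjmx R (line_adj g)) (-2) = 0 <->
  (forall k, balanced k -> \sum_i v 0 i * weight_row k 0 i = 0).
Proof.
rewrite /eigproj /eigenspace orthproj_eq0P; split=> [orth k /balancedP kM0 | orth w].
  by apply: orth; rewrite sub_kermx kM0.
rewrite sub_kermx => /eqP wM0; rewrite -[w]weight_row_entries; apply: orth.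
by apply/balancedP; rewrite weight_row_entries.
Qed.

Lemma Fm2_scaleP (e1 e2 : edge_of g) (s : R) :
  Fm2 R e1 = s *: Fm2 R e2 <-> balanced_ratio e1 e2 s.
Proof.
have -> : Fm2 R e1 = s *: Fm2 R e2 <->
    (vstate R e1 - s *: vstate R e2) *m eigproj (adjmx R (line_adj g)) (-2) = 0.
  rewrite /Fm2 mulmxBl -scalemxAl; split=> [-> | /eqP]; first by rewrite subrr.
  by rewrite subr_eq0 => /eqP.
have dotB (v1 v2 w : 'rV[R]_#|{: edge_of g}|) :
    \sum_i (v1 - s *: v2) 0 i * w 0 i
    = \sum_i v1 0 i * w 0 i - s * \sum_i v2 0 i * w 0 i.
  by rewrite mulr_sumr -sumrB; apply: eq_bigr => i _; rewrite !mxE mulrBl mulrA.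
rewrite Fm2_eq0P; split=> ratio k /ratio; rewrite dotB !dot_vstate !weight_rowE.
  by move/eqP; rewrite subr_eq0 => /eqP.
by move=> ->; rewrite subrr.
Qed.

Lemma Fm2_neq0 (e : edge_of g) k : balanced k -> k e != 0 -> Fm2 R e != 0.
Proof.
move=> bal_k ke0; apply: contraNneq ke0 => Fe0.
have /Fm2_scaleP/(_ k bal_k) -> : Fm2 R e = 0 *: Fm2 R e by rewrite Fe0 scaler0.
by rewrite mul0r.
Qed.

Lemma m2_notin_suppP (f : edge_of g) :
  m2_notin_supp R f <-> (forall k, balanced k -> k f = 0).
Proof.
rewrite /m2_notin_supp /in_eig_support negb_and negbK.
have vf_dot k : balanced k ->
    \sum_i vstate R f 0 i * weight_row k 0 i = k f.
  by move=> _; rewrite dot_vstate weight_rowE.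
split=> [/orP [no_eig | /eqP /Fm2_eq0P vf0] k bal_k | vf0].
- have /eqP := proj2 (balancedP k) bal_k; rewrite -sub_kermx.
  move: no_eig; rewrite /eigenvalue /eigenspace negbK => /eqP ->.
  rewrite submx0 => /eqP k0.
  by rewrite -weight_rowE k0 mxE.
- by rewrite -vf_dot //; exact: vf0.
apply/orP; right; apply/eqP/Fm2_eq0P => k bal_k.
by rewrite vf_dot //; exact: vf0.
Qed.

Lemma balanced_ratio_sym (e1 e2 : edge_of g) (s : R) :
  s * s = 1 -> balanced_ratio e1 e2 s -> balanced_ratio e2 e1 s.
Proof. by move=> ss ratio k bal_k; rewrite (ratio k bal_k) mulrA ss mul1r. Qed.

Lemma ratio_of_deg2 (e1 e2 : edge_of g) w :
  e1 != e2 -> w \in val e1 -> w \in val e2 ->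
  (forall f : edge_of g, w \in val f -> f = e1 \/ f = e2) -> balanced_ratio e1 e2 (-1 : R).
Proof.
move=> ne12 we1 we2 deg2 k bal_k; have := bal_k w.
rewrite /vsum (bigD1 e1) // (bigD1 e2) /=; last by rewrite we2 eq_sym ne12.
rewrite big1 ?addr0 => [/eqP | f /andP [/andP [wf nf1] nf2]].
  by rewrite addr_eq0 mulN1r => /eqP.
by case: (deg2 f wf) => fE; rewrite fE eqxx ?andbF in nf1 nf2.
Qed.

Lemma sum_mul_val_eq (k : edge_of g -> R) (e : edge_of g) :
  \sum_(f : edge_of g) k f * (val f == val e)%:R = k e.
Proof.
rewrite (bigD1 e) //= eqxx mulr1 big1 ?addr0 // => f /negPf fe.
by rewrite (inj_eq val_inj) fe mulr0.
Qed.

Lemma vsum_edge_indicator (S : {set T}) (S_edge : is_edgeb g S) u :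
  \sum_(f : edge_of g | u \in val f) ((val f == S)%:R : R) = (u \in S)%:R.
Proof.
pose fS : edge_of g := exist _ S S_edge.
have val_eqS f : (val f == S) = (f == fS) by rewrite -(inj_eq val_inj).
under eq_bigr do rewrite val_eqS.
have [uS | uNS] := boolP (u \in S).
  by rewrite (bigD1 fS) //= eqxx big1 ?addr0 // => f /andP [_ /negPf ->].
by rewrite big1 // => f uf; case: eqP uf => // -> /=; rewrite (negPf uNS).
Qed.

Definition edge_comb (I : Type) (r : seq I) (c : I -> R) (s : I -> {set T})
  (f : edge_of g) : R := \sum_(i <- r) c i * (val f == s i)%:R.

Lemma vsum_edge_comb (I : eqType) (r : seq I) (c : I -> R) (s : I -> {set T}) u :
  (forall i, i \in r -> is_edgeb g (s i)) ->
  vsum (edge_comb r c s) u = \sum_(i <- r) c i * (u \in s i)%:R.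
Proof.
move=> s_edge; rewrite /vsum /edge_comb exchange_big /= big_seq [RHS]big_seq.
by apply: eq_bigr => i ir; rewrite -mulr_sumr vsum_edge_indicator ?s_edge.
Qed.

Section Square.
Variables w1 w2 w3 w4 : T.
Hypotheses (g12 : g w1 w2) (g23 : g w2 w3) (g34 : g w3 w4) (g41 : g w4 w1).
Hypotheses (n13 : w1 != w3) (n24 : w2 != w4).

Definition square_weighting : edge_of g -> R :=
  edge_comb [:: (1, [set w1; w2]); (-1, [set w2; w3]); (1, [set w3; w4]); (-1, [set w4; w1])]
    fst snd.

Lemma square_weighting_balanced : balanced square_weighting.
Proof.
have nset2 x y u : x != y -> ((u \in [set x; y])%:R : R) = (u == x)%:R + (u == y)%:R.
  by move=> xy; rewrite !inE; case: (u =P x) => [-> | _]; rewrite ?(negPf xy) ?addr0 ?add0r.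
move=> u; rewrite vsum_edge_comb; last first.
  by move=> i; rewrite !inE => /or4P [] /eqP -> /=; apply: is_edgeb_set2.
rewrite !big_cons big_nil /= !nset2; first ring.
all: by apply: (adj_neq irr).
Qed.

Lemma square_sides_neq :
  [/\ [set w1; w2] != [set w2; w3], [set w1; w2] != [set w3; w4],
      [set w1; w2] != [set w4; w1] &
      [/\ [set w2; w3] != [set w3; w4], [set w2; w3] != [set w4; w1]
         & [set w3; w4] != [set w4; w1]]].
Proof.
have n12 := adj_neq irr g12; have n23 := adj_neq irr g23.
have n34 := adj_neq irr g34; have n41 := adj_neq irr g41.
have neq_at z (A B : {set T}) : z \notin A -> z \in B -> A != B.
  by move=> zA zB; apply: contraNneq zA => ->.
split; [apply: (neq_at w3) | apply: (neq_at w3) | apply: (neq_at w4) | split;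
  [apply: (neq_at w4) | apply: (neq_at w4) | apply: (neq_at w1)]];
  rewrite !inE ?eqxx ?orbT // negb_or.
all: by apply/andP; split; rewrite // eq_sym.
Qed.

Lemma square_weighting_w12 e : val e = [set w1; w2] -> square_weighting e = 1.
Proof.
have [d12 d13 d14 _] := square_sides_neq.
rewrite /square_weighting /edge_comb !big_cons big_nil /= => ->; rewrite eqxx.
by rewrite (negPf d12) (negPf d13) (negPf d14) /=; ring.
Qed.

Lemma square_ratio (e1 e2 : edge_of g) (s : R) :
  val e1 = [set w1; w2] -> e2 != e1 -> balanced_ratio e1 e2 s ->
  [\/ val e2 = [set w2; w3] /\ s = -1, val e2 = [set w3; w4] /\ s = 1
    | val e2 = [set w4; w1] /\ s = -1].
Proof.
move=> e1E ne21 ratio; have [_ _ _ [d23 d24 d34]] := square_sides_neq.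
have := ratio _ square_weighting_balanced; rewrite square_weighting_w12 //.
rewrite /square_weighting /edge_comb !big_cons big_nil /=.
have -> : (val e2 == [set w1; w2]) = false by rewrite -e1E (inj_eq val_inj) (negPf ne21).
case: (val e2 =P [set w2; w3]) => [-> | _].
  by rewrite (negPf d23) (negPf d24) /= => s1; constructor 1; split => //; lra.
case: (val e2 =P [set w3; w4]) => [-> | _].
  by rewrite (negPf d34) /= => s1; constructor 2; split => //; lra.
case: (val e2 =P [set w4; w1]) => [-> | _] /= s1; first by constructor 3; split => //; lra.
by have /eqP := s1; rewrite !(mulr0, addr0, subr0) oner_eq0.
Qed.

End Square.

End BalancedWeightings.

Section LiftAlongEmbedding.
Variables (R : realType) (T1 T : finType) (g1 : rel T1) (G : rel T) (phi : T1 -> T).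
Hypotheses (irr1 : irreflexive g1) (phi_inj : injective phi)
  (phi_hom : forall x y, g1 x y -> G (phi x) (phi y)).

Lemma is_edgeb_imset (f : edge_of g1) : is_edgeb G (phi @: val f).
Proof.
have [x [y [gxy ->]]] := edgeP f.
by rewrite imsetU1 imset_set1; apply/is_edgeb_set2/phi_hom.
Qed.

(* Copy of a weighting of g1 onto the image of g1 in G, extended by zero. *)
Definition lift_weighting (k1 : edge_of g1 -> R) : edge_of G -> R :=
  edge_comb (index_enum (edge_of g1)) k1 (fun f => phi @: val f).

Lemma lift_balanced k1 : balanced k1 -> balanced (lift_weighting k1).
Proof.
move=> bal_k1 u; rewrite vsum_edge_comb => [|f _]; last exact: is_edgeb_imset.
case: (pickP (fun x => u == phi x)) => [x /eqP -> | u_out].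
  under eq_bigr do rewrite mem_imset //.
  rewrite -[RHS](bal_k1 x) /vsum [RHS]big_mkcond /=; apply: eq_bigr => f _.
  by case: (x \in val f); rewrite ?mulr1 ?mulr0.
apply: big1 => f _; case: imsetP => [[x _ ux] | _]; last by rewrite mulr0.
by have := u_out x; rewrite /= ux eqxx.
Qed.

Lemma lift_weighting_imset k1 (e : edge_of G) (f : edge_of g1) :
  val e = phi @: val f -> lift_weighting k1 e = k1 f.
Proof.
move=> eE; rewrite /lift_weighting /edge_comb eE -[RHS](sum_mul_val_eq k1 f).
by apply: eq_bigr => f' _; rewrite (inj_eq (imset_inj phi_inj)) eq_sym.
Qed.

Lemma lift_weighting_out k1 (e : edge_of G) z :
  z \in val e -> (forall x, z != phi x) -> lift_weighting k1 e = 0.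
Proof.
move=> ze z_out; rewrite /lift_weighting /edge_comb big1 // => f _.
case: (val e =P _) => [eE | _]; last by rewrite mulr0.
by move: ze; rewrite eE => /imsetP [x _ zx]; have := z_out x; rewrite zx eqxx.
Qed.

(* The lift of a balanced weighting k1 of g1 is k1 f at e and 0 at e'. *)
Lemma m2_notin_supp_of_ratio (e e' : edge_of G) (f : edge_of g1) (s : R) z :
  balanced_ratio e e' s -> val e = phi @: val f ->
  z \in val e' -> (forall x, z != phi x) -> m2_notin_supp R f.
Proof.
move=> ratio eE ze' z_out; apply/(m2_notin_suppP R irr1) => k1 bal_k1.
have := ratio _ (lift_balanced bal_k1).
by rewrite (lift_weighting_imset _ eE) (lift_weighting_out _ ze' z_out) mulr0.
Qed.

End LiftAlongEmbedding.

Section TwinLayers.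
Variables (R : realType) (T1 T : finType) (g1 : rel T1) (G : rel T).
Hypothesis irr1 : irreflexive g1.

Lemma vsum_imset_indicator (phi : T1 -> T) (f : edge_of g1) (S : {set T}) x :
  injective phi -> S = phi @: val f ->
  \sum_(f1 : edge_of g1 | x \in val f1) ((S == phi @: val f1)%:R : R) = (phi x \in S)%:R.
Proof.
move=> phi_inj ->; under eq_bigr do rewrite (inj_eq (imset_inj phi_inj)) eq_sym.
by rewrite vsum_edge_indicator ?(valP f) // mem_imset.
Qed.

Lemma vsum_imset_indicator_out (phi : T1 -> T) (S : {set T}) z x :
  z \in S -> (forall y, z != phi y) ->
  \sum_(f1 : edge_of g1 | x \in val f1) ((S == phi @: val f1)%:R : R) = 0.
Proof.
move=> zS z_out; apply: big1 => f1 _; case: eqP => // SE.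
by move: zS; rewrite SE => /imsetP [y _ zy]; have := z_out y; rewrite zy eqxx.
Qed.

(* The first hypothesis says, in indicator form, that f1 |-> k (pp f1) - k (pq f1) is a
   balanced weighting of g1 whenever k is a balanced weighting of G. *)
Lemma ratio_of_twin_layers (pp pq : T1 -> T) (f : edge_of g1) (e1 e2 : edge_of G) :
  (forall (e : edge_of G) x,
     \sum_(f1 : edge_of g1 | x \in val f1)
        (((val e == pp @: val f1)%:R : R) - (val e == pq @: val f1)%:R)
     = (pp x \in val e)%:R - (pq x \in val e)%:R) ->
  m2_notin_supp R f -> val e1 = pp @: val f -> val e2 = pq @: val f ->
  balanced_ratio e1 e2 (1 : R).
Proof.
move=> layer_sum /(m2_notin_suppP R irr1) m2f e1E e2E k bal_k.
pose k1 (f1 : edge_of g1) : R :=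
  \sum_(e : edge_of G) k e * ((val e == pp @: val f1)%:R - (val e == pq @: val f1)%:R).
have bal_k1 : balanced k1.
  move=> x; rewrite /vsum /k1 exchange_big /=.
  under eq_bigr do rewrite -mulr_sumr layer_sum mulrBr.
  rewrite sumrB -[RHS](subrr 0); congr (_ - _).
    rewrite -[RHS](bal_k (pp x)) /vsum [RHS]big_mkcond /=; apply: eq_bigr => e _.
    by case: (_ \in _); rewrite ?mulr1 ?mulr0.
  rewrite -[RHS](bal_k (pq x)) /vsum [RHS]big_mkcond /=; apply: eq_bigr => e _.
  by case: (_ \in _); rewrite ?mulr1 ?mulr0.
have := m2f k1 bal_k1.
rewrite /k1 -e1E -e2E; under eq_bigr do rewrite mulrBr.
by rewrite sumrB !sum_mul_val_eq mul1r => /eqP; rewrite subr_eq0 => /eqP.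
Qed.

End TwinLayers.

Lemma card2_mem (T : finType) (p q : T) : p != q -> #|T| = 2%N -> forall y, (y == p) || (y == q).
Proof.
move=> pq cardT y.
have : [set p; q] = [set: T] by apply/eqP; rewrite eqEcard subsetT cardsT cards2 pq cardT.
by move/setP/(_ y); rewrite !inE.
Qed.

Section CartesianProduct.
Variables (R : realType) (T1 T2 : finType) (g1 : rel T1) (g2 : rel T2).
Hypotheses (sym1 : symmetric g1) (irr1 : irreflexive g1).
Hypotheses (sym2 : symmetric g2) (irr2 : irreflexive g2).
Hypotheses (conn1 : connectedg g1) (conn2 : connectedg g2).
Hypotheses (two1 : (1 < #|T1|)%N) (two2 : (1 < #|T2|)%N).

Local Notation X := (cart_adj g1 g2).

Lemma cart_adjh a b c : g1 a b -> X (a, c) (b, c).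
Proof. by move=> gab; rewrite /cart_adj /= eqxx gab orbT. Qed.

Lemma cart_adjv a x y : g2 x y -> X (a, x) (a, y).
Proof. by move=> gxy; rewrite /cart_adj /= eqxx gxy. Qed.

Lemma cart_irr : irreflexive X.
Proof. by move=> [x y]; rewrite /cart_adj /= irr1 irr2 !andbF. Qed.

Lemma cart_sym : symmetric X.
Proof.
by move=> [x1 x2] [y1 y2]; rewrite /cart_adj /= sym1 sym2 (eq_sym x1) (eq_sym x2).
Qed.

Lemma cart_edgeP (e : edge_of X) :
  (exists a b c, g1 a b /\ val e = [set (a, c); (b, c)]) \/
  (exists a x y, g2 x y /\ val e = [set (a, x); (a, y)]).
Proof.
have [[u1 u2] [[v1 v2] [/orP [] /andP [/eqP /= uv gv] ->]]] := edgeP e.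
  by right; exists u1, u2, v2; rewrite uv.
by left; exists u1, v1, u2; rewrite uv.
Qed.

Lemma pair_neq1 (a b : T1) (x y : T2) : a != b -> (a, x) != (b, y).
Proof. by move=> ab; rewrite xpair_eqE negb_and ab. Qed.

Lemma pair_neq2 (a b : T1) (x y : T2) : x != y -> (a, x) != (b, y).
Proof. by move=> xy; rewrite xpair_eqE negb_and xy orbT. Qed.

Lemma cart_square_h a b c d : g1 a b -> g2 c d ->
  [/\ X (a, c) (b, c), X (b, c) (b, d), X (b, d) (a, d) & X (a, d) (a, c)].
Proof.
move=> gab gcd; split; [exact: cart_adjh | exact: cart_adjv
  | by apply: cart_adjh; rewrite sym1 | by apply: cart_adjv; rewrite sym2].
Qed.

Lemma cart_square_ratio_h a b c d (e1 e2 : edge_of X) (s : R) :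
  g1 a b -> g2 c d -> val e1 = [set (a, c); (b, c)] -> e2 != e1 -> balanced_ratio e1 e2 s ->
  [\/ val e2 = [set (b, c); (b, d)] /\ s = -1, val e2 = [set (b, d); (a, d)] /\ s = 1
    | val e2 = [set (a, d); (a, c)] /\ s = -1].
Proof.
move=> gab gcd; have ab := adj_neq irr1 gab.
have [h1 h2 h3 h4] := cart_square_h gab gcd.
by apply: (square_ratio cart_irr h1 h2 h3 h4); rewrite pair_neq1 // eq_sym.
Qed.

Lemma cart_square_ratio_v a b c d (e1 e2 : edge_of X) (s : R) :
  g2 c d -> g1 a b -> val e1 = [set (a, c); (a, d)] -> e2 != e1 -> balanced_ratio e1 e2 s ->
  [\/ val e2 = [set (a, d); (b, d)] /\ s = -1, val e2 = [set (b, d); (b, c)] /\ s = 1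
    | val e2 = [set (b, c); (a, c)] /\ s = -1].
Proof.
move=> gcd gab; have ab := adj_neq irr1 gab.
apply: (square_ratio cart_irr); [exact: cart_adjv | exact: cart_adjh
  | by apply: cart_adjv; rewrite sym2 | by apply: cart_adjh; rewrite sym1
  | exact: pair_neq1 | exact: pair_neq1].
Qed.

Lemma pendant_of_ratio_h a b c (e1 e2 : edge_of X) (s : R) :
  g1 a b -> val e1 = [set (a, c); (b, c)] -> e2 != e1 -> balanced_ratio e1 e2 s ->
  pendant g2 c.
Proof.
move=> gab e1E ne21 ratio; have [d gcd] := connected_adj conn2 two2 c.
apply: (pendant_of_proj irr2 (p := snd) (V := val e2) gcd) => z gcz.
case: (cart_square_ratio_h gab gcz e1E ne21 ratio) => -[-> _]; split=> [|u].
all: try by (exists (b, z) + exists (a, z)); rewrite ?inE ?eqxx ?orbT.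
all: by rewrite !inE => /orP [] /eqP -> /=; rewrite eqxx ?orbT.
Qed.

Lemma pendant_of_ratio_v a c d (e1 e2 : edge_of X) (s : R) :
  g2 c d -> val e1 = [set (a, c); (a, d)] -> e2 != e1 -> balanced_ratio e1 e2 s ->
  pendant g1 a.
Proof.
move=> gcd e1E ne21 ratio; have [b gab] := connected_adj conn1 two1 a.
apply: (pendant_of_proj irr1 (p := fst) (V := val e2) gab) => z gaz.
case: (cart_square_ratio_v gcd gaz e1E ne21 ratio) => -[-> _]; split=> [|u].
all: try by (exists (z, d) + exists (z, c)); rewrite ?inE ?eqxx ?orbT.
all: by rewrite !inE => /orP [] /eqP -> /=; rewrite eqxx ?orbT.
Qed.

Lemma m2_notin_supp_h a b c (gab : g1 a b) (e e' : edge_of X) (s : R) z :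
  balanced_ratio e e' s -> val e = [set (a, c); (b, c)] -> z \in val e' -> z.2 != c ->
  m2_notin_supp R (mkedge gab).
Proof.
move=> ratio eE ze' zc.
apply: (m2_notin_supp_of_ratio (phi := fun x => (x, c)) irr1 _ _ ratio _ ze').
- by move=> x y [].
- by move=> x y; apply: cart_adjh.
- by rewrite eE /= imsetU1 imset_set1.
- by move=> x; apply: contraNneq zc => ->.
Qed.

Lemma m2_notin_supp_v a x y (gxy : g2 x y) (e e' : edge_of X) (s : R) z :
  balanced_ratio e e' s -> val e = [set (a, x); (a, y)] -> z \in val e' -> z.1 != a ->
  m2_notin_supp R (mkedge gxy).
Proof.
move=> ratio eE ze' za.
apply: (m2_notin_supp_of_ratio (phi := fun y => (a, y)) irr2 _ _ ratio _ ze').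
- by move=> u v [].
- by move=> u v; apply: cart_adjv.
- by rewrite eE /= imsetU1 imset_set1.
- by move=> u; apply: contraNneq za => ->.
Qed.

Lemma balanced_through_h a b c (e : edge_of X) :
  g1 a b -> val e = [set (a, c); (b, c)] -> exists k : edge_of X -> R, balanced k /\ k e = 1.
Proof.
move=> gab eE; have [d gcd] := connected_adj conn2 two2 c.
have ab := adj_neq irr1 gab.
have [h1 h2 h3 h4] := cart_square_h gab gcd.
exists (square_weighting R (a, c) (b, c) (b, d) (a, d)); split.
  exact (square_weighting_balanced R cart_irr h1 h2 h3 h4).
by apply: (square_weighting_w12 R cart_irr h1 h2 h3 h4) => //; rewrite pair_neq1 // eq_sym.
Qed.

(* Necessity when e1 lies in a copy of X1; the other orientation follows by symmetry. *)
Lemma cases_of_ratio_h a b c (e1 e2 : edge_of X) (s : R) :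
  g1 a b -> val e1 = [set (a, c); (b, c)] -> e1 != e2 ->
  balanced_ratio e1 e2 s -> balanced_ratio e2 e1 s -> case_i R e1 e2 \/ case_ii' R e1 e2.
Proof.
move=> gab e1E ne12 ratio ratio'.
have ne21 : e2 != e1 by rewrite eq_sym.
have gba : g1 b a by rewrite sym1.
have pc := pendant_of_ratio_h gab e1E ne21 ratio.
have [d gcd] := connected_adj conn2 two2 c.
have [ab cd] := (adj_neq irr1 gab, adj_neq irr2 gcd).
have in_e1 u : u \in [set (a, c); (b, c)] -> u \in val e1 by rewrite e1E.
have e1E' : val e1 = [set (b, c); (a, c)] by rewrite e1E setUC.
case: (cart_square_ratio_h gab gcd e1E ne21 ratio) => -[e2E _].
- right; exists c, d, b, a, (mkedge gcd), (mkedge gba); split => //.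
  + by split=> //; apply: (pendant_of_ratio_v gcd e2E ne12 ratio').
  + split.
      by apply: (m2_notin_supp_v gcd ratio' e2E (z := (a, c))); rewrite ?in_e1 ?inE ?eqxx.
    apply: (m2_notin_supp_h gba ratio e1E' (z := (b, d))); rewrite ?e2E ?inE ?eqxx ?orbT //.
    by rewrite eq_sym.
- left; split.
    apply: (card_pendant_edge sym2 irr2 conn2 gcd pc).
    exact: (pendant_of_ratio_h gba e2E ne12 ratio').
  exists c, d, a, b, (mkedge gab); split => //; last by rewrite e2E setUC.
  apply: (m2_notin_supp_h gab ratio e1E (z := (b, d)));
  by rewrite ?e2E ?inE ?eqxx // eq_sym.
- have e2E' : val e2 = [set (a, c); (a, d)] by rewrite e2E setUC.
  right; exists c, d, a, b, (mkedge gcd), (mkedge gab); split => //.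
  + by split=> //; apply: (pendant_of_ratio_v gcd e2E' ne12 ratio').
  + split.
      apply: (m2_notin_supp_v gcd ratio' e2E' (z := (b, c)));
      by rewrite ?in_e1 ?inE ?eqxx ?orbT // eq_sym.
    apply: (m2_notin_supp_h gab ratio e1E (z := (a, d)));
    by rewrite ?e2E' ?inE ?eqxx ?orbT // eq_sym.
Qed.

(* A pendant vertex of each factor gives a vertex of degree 2 in X. *)
Lemma ratio_of_case_ii (e1 e2 : edge_of X) : case_ii R e1 e2 -> balanced_ratio e1 e2 (-1 : R).
Proof.
case=> a [b [al [be [f1 [f2 [[pa pal] f1E f2E _ [e1E e2E]]]]]]].
have gab := edge_set2_adj sym1 irr1 f1E; have gal := edge_set2_adj sym2 irr2 f2E.
have [ab albe] := (adj_neq irr1 gab, adj_neq irr2 gal).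
apply: (ratio_of_deg2 (w := (a, al))); rewrite ?e1E ?e2E ?inE ?eqxx //.
  apply/eqP => e12; have : (a, be) \in val e2 by rewrite -e12 e1E !inE eqxx orbT.
  by rewrite e2E !inE !xpair_eqE eqxx (eq_sym be) (negPf albe) (negPf ab).
move=> f /(edge_through cart_sym) [[z1 z2] gz fE].
case/orP: gz => /andP [/eqP /= zE gz].
  by left; apply: val_inj; rewrite fE e1E -zE (pendant_adj_eq pal gz gal).
by right; apply: val_inj; rewrite fE e2E -zE (pendant_adj_eq pa gz gab).
Qed.

(* The rung {(x,p),(x,q)} cancels in the difference of the two copies of X1. *)
Lemma ratio_of_case_i (e1 e2 : edge_of X) : case_i R e1 e2 -> balanced_ratio e1 e2 (1 : R).
Proof.
case=> card2 [p [q [a [b [f [pq fE m2f e1E e2E]]]]]].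
have T2E := card2_mem pq card2.
have [inj_p inj_q] : injective (fun x : T1 => (x, p)) /\ injective (fun x : T1 => (x, q)).
  by split=> x y [].
apply: (ratio_of_twin_layers (pp := fun x => (x, p)) (pq := fun x => (x, q)) irr1 _ m2f);
  rewrite ?e1E ?e2E ?fE ?imsetU1 ?imset_set1 //.
move=> e x; rewrite sumrB.
case: (cart_edgeP e) => [[u [v [c [guv eE]]]] | [u [y1 [y2 [gy eE]]]]].
- have eE_at d : c = d -> val e = (fun x => (x, d)) @: val (mkedge guv).
    by move=> <-; rewrite eE /= imsetU1 imset_set1.
  case/orP: (T2E c) => /eqP cd; have eEd := eE_at _ cd; rewrite cd in eE.
    rewrite (vsum_imset_indicator _ _ inj_p eEd).
    rewrite (vsum_imset_indicator_out _ _ (z := (u, p))) ?eE ?inE ?eqxx //; last first.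
      by move=> y; apply: pair_neq2.
    by rewrite !xpair_eqE eqxx (eq_sym q p) (negPf pq) !andbF subr0.
  rewrite (vsum_imset_indicator _ _ inj_q eEd).
  rewrite (vsum_imset_indicator_out _ _ (z := (u, q))) ?eE ?inE ?eqxx //; last first.
    by move=> y; apply: pair_neq2; rewrite eq_sym.
  by rewrite !xpair_eqE eqxx (negPf pq) !andbF.
- have eE' : val e = [set (u, p); (u, q)].
    rewrite eE; case/orP: (T2E y1) => /eqP y1E; case/orP: (T2E y2) => /eqP y2E;
      by move: (adj_neq irr2 gy); rewrite y1E y2E ?eqxx // => _; rewrite setUC.
  rewrite (vsum_imset_indicator_out _ _ (z := (u, q))) ?eE' ?inE ?eqxx ?orbT //; last first.
    by move=> y; apply: pair_neq2; rewrite eq_sym.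
  rewrite (vsum_imset_indicator_out _ _ (z := (u, p))) ?eE' ?inE ?eqxx ?orbT //; last first.
    by move=> y; apply: pair_neq2.
  by rewrite !xpair_eqE !eqxx (eq_sym q p) (negPf pq) !andbT !andbF orbF /= !subrr.
Qed.

End CartesianProduct.

Section Swap.
Variables (T1 T2 : finType) (g1 : rel T1) (g2 : rel T2).

Definition swap_pair (u : T1 * T2) : T2 * T1 := (u.2, u.1).

Lemma cart_adj_swap u v : cart_adj g2 g1 (swap_pair u) (swap_pair v) = cart_adj g1 g2 u v.
Proof. by rewrite /cart_adj /= orbC. Qed.

Definition swap_edge (e : edge_of (cart_adj g1 g2)) : edge_of (cart_adj g2 g1) :=
  exist _ (swap_pair @: val e) (is_edgeb_imset (fun u v => etrans (cart_adj_swap u v)) e).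

End Swap.
Arguments swap_pair {T1 T2}.
Arguments swap_edge {T1 T2 g1 g2}.

Lemma swap_edgeK (T1 T2 : finType) (g1 : rel T1) (g2 : rel T2) (e : edge_of (cart_adj g1 g2)) :
  swap_edge (swap_edge e) = e.
Proof.
have idK : (@swap_pair T2 T1) \o (@swap_pair T1 T2) =1 id by case.
by apply: val_inj; rewrite /= -imset_comp (eq_imset _ idK) imset_id.
Qed.

Section SwapTheory.
Variables (T1 T2 : finType) (g1 : rel T1) (g2 : rel T2).

Lemma swap_edge_set2 (e : edge_of (cart_adj g1 g2)) x1 x2 y1 y2 :
  val (swap_edge e) = [set (x2, x1); (y2, y1)] <-> val e = [set (x1, x2); (y1, y2)].
Proof.
split=> [swE | eE]; last by rewrite /= eE imsetU1 imset_set1.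
have -> : val e = swap_pair @: val (swap_edge e) by rewrite -[in LHS](swap_edgeK e).
by rewrite swE imsetU1 imset_set1.
Qed.

Lemma balanced_swap (R : realType) (k : edge_of (cart_adj g2 g1) -> R) :
  balanced k -> balanced (k \o swap_edge).
Proof.
move=> bal_k u; rewrite -(bal_k (swap_pair u)) /vsum (reindex swap_edge) /=; last first.
  by exists swap_edge => f _; exact: swap_edgeK.
apply: eq_big => [f | f _]; last by rewrite swap_edgeK.
have swK1 : cancel (@swap_pair T1 T2) swap_pair by case.
have swK2 : cancel (@swap_pair T2 T1) swap_pair by case.
by rewrite -{1}[u]swK1 mem_imset //; exact: can_inj swK2.
Qed.

Lemma balanced_ratio_swap (R : realType) (e1 e2 : edge_of (cart_adj g1 g2)) (s : R) :
  balanced_ratio e1 e2 s -> balanced_ratio (swap_edge e1) (swap_edge e2) s.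
Proof. by move=> ratio k /balanced_swap /ratio. Qed.

Lemma case_i_swap (R : realType) (e1 e2 : edge_of (cart_adj g1 g2)) :
  case_i R (swap_edge e1) (swap_edge e2) <-> case_i' R e1 e2.
Proof.
split=> -[card2 [p [q [a [b [f [pq fE m2f e1E e2E]]]]]]]; split=> //.
  by exists p, q, a, b, f; split=> //; apply/swap_edge_set2.
by exists p, q, a, b, f; split=> //; apply/swap_edge_set2.
Qed.

Lemma case_ii_swap (R : realType) (e1 e2 : edge_of (cart_adj g1 g2)) :
  case_ii R (swap_edge e1) (swap_edge e2) <-> case_ii' R e1 e2.
Proof.
split=> -[a [b [al [be [f1 [f2 [pend f1E f2E m2f [e1E e2E]]]]]]]].
  by exists a, b, al, be, f1, f2; split=> //; split; apply/swap_edge_set2.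
by exists a, b, al, be, f1, f2; split=> //; split; apply/swap_edge_set2.
Qed.

End SwapTheory.

Section SymmetricProduct.
Variables (R : realType) (T1 T2 : finType) (g1 : rel T1) (g2 : rel T2).
Hypotheses (sym1 : symmetric g1) (irr1 : irreflexive g1).
Hypotheses (sym2 : symmetric g2) (irr2 : irreflexive g2).
Hypotheses (conn1 : connectedg g1) (conn2 : connectedg g2).
Hypotheses (two1 : (1 < #|T1|)%N) (two2 : (1 < #|T2|)%N).

Lemma Fm2_cart_neq0 (e : edge_of (cart_adj g1 g2)) : Fm2 R e != 0.
Proof.
suff [k [bal_k ke1]] : exists k : edge_of (cart_adj g1 g2) -> R, balanced k /\ k e = 1.
  by apply: (Fm2_neq0 (cart_irr irr1 irr2) bal_k); rewrite ke1 oner_eq0.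
case: (cart_edgeP e) => [[a [b [c [gab eE]]]] | [a [x [y [gxy eE]]]]].
  exact (balanced_through_h R sym1 irr1 sym2 irr2 conn2 two2 gab eE).
have /swap_edge_set2 swE := eE.
have [k [bal_k ke1]] := balanced_through_h R sym2 irr2 sym1 irr1 conn1 two1 gxy swE.
by exists (k \o swap_edge); split; first exact: balanced_swap.
Qed.

Lemma ratio_of_case_i_sym (e1 e2 : edge_of (cart_adj g1 g2)) :
  case_i_sym R e1 e2 -> balanced_ratio e1 e2 (1 : R).
Proof.
have one2 : (1 : R) * 1 = 1 by rewrite mulr1.
have swapped (e1' e2' : edge_of (cart_adj g1 g2)) :
    case_i' R e1' e2' -> balanced_ratio e1' e2' (1 : R).
  move=> /case_i_swap H; rewrite -(swap_edgeK e1') -(swap_edgeK e2').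
  exact (balanced_ratio_swap (ratio_of_case_i irr2 irr1 H)).
case=> [H | [H | [H | H]]].
- exact (ratio_of_case_i irr1 irr2 H).
- exact (balanced_ratio_sym one2 (ratio_of_case_i irr1 irr2 H)).
- exact: swapped.
- exact (balanced_ratio_sym one2 (swapped _ _ H)).
Qed.
Lemma ratio_of_case_ii_sym (e1 e2 : edge_of (cart_adj g1 g2)) :
  case_ii_sym R e1 e2 -> balanced_ratio e1 e2 (-1 : R).
Proof.
have sqrN1 : (-1 : R) * -1 = 1 by rewrite mulrNN mulr1.
have swapped (e1' e2' : edge_of (cart_adj g1 g2)) :
    case_ii' R e1' e2' -> balanced_ratio e1' e2' (-1 : R).
  move=> /case_ii_swap H; rewrite -(swap_edgeK e1') -(swap_edgeK e2').
  exact (balanced_ratio_swap (ratio_of_case_ii sym2 irr2 sym1 irr1 H)).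
case=> [H | [H | [H | H]]].
- exact (ratio_of_case_ii sym1 irr1 sym2 irr2 H).
- exact (balanced_ratio_sym sqrN1 (ratio_of_case_ii sym1 irr1 sym2 irr2 H)).
- exact: swapped.
- exact (balanced_ratio_sym sqrN1 (swapped _ _ H)).
Qed.

Lemma cases_of_ratio (e1 e2 : edge_of (cart_adj g1 g2)) (s : R) :
  e1 != e2 -> s * s = 1 -> balanced_ratio e1 e2 s ->
  case_i_sym R e1 e2 \/ case_ii_sym R e1 e2.
Proof.
move=> ne12 ss ratio; have ratio' := balanced_ratio_sym ss ratio.
case: (cart_edgeP e1) => [[a [b [c [gab e1E]]]] | [a [x [y [gxy e1E]]]]].
  by case: (cases_of_ratio_h sym1 irr1 sym2 irr2 conn1 conn2 two1 two2 gab e1E ne12 ratio ratio');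
    [left; left | right; right; right; left].
have /swap_edge_set2 swE := e1E.
have sw_ne12 : swap_edge e1 != swap_edge e2.
  by apply: contra_neq ne12 => sw12; rewrite -(swap_edgeK e1) sw12 swap_edgeK.
case: (cases_of_ratio_h sym2 irr2 sym1 irr1 conn2 conn1 two2 two1 gxy swE sw_ne12
        (balanced_ratio_swap ratio) (balanced_ratio_swap ratio')) => [/case_i_swap | ].
  by left; right; right; left.
by move/case_ii_swap; rewrite !swap_edgeK; right; left.
Qed.

End SymmetricProduct.

Theorem mainTheorem17 (R : realType) (T1 T2 : finType) (g1 : rel T1) (g2 : rel T2)
  (sym1 : symmetric g1) (irr1 : irreflexive g1)
  (sym2 : symmetric g2) (irr2 : irreflexive g2)
  (conn1 : connectedg g1) (conn2 : connectedg g2)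
  (two1 : (1 < #|T1|)%N) (two2 : (1 < #|T2|)%N)
  (e1 e2 : edge_of (cart_adj g1 g2)) (ne12 : e1 != e2) :
  [/\ (Fm2 R e1 = Fm2 R e2 \/ Fm2 R e1 = - Fm2 R e2)
        <-> (case_i_sym R e1 e2 \/ case_ii_sym R e1 e2),
      case_i_sym R e1 e2 -> Fm2 R e1 = Fm2 R e2 /\ Fm2 R e1 != 0 &
      case_ii_sym R e1 e2 -> Fm2 R e1 = - Fm2 R e2 /\ Fm2 R e1 != 0].
Proof.
have irr := cart_irr irr1 irr2.
have Fm2_eq := Fm2_scaleP irr e1 e2 (1 : R); rewrite scale1r in Fm2_eq.
have Fm2_eqN := Fm2_scaleP irr e1 e2 (-1 : R); rewrite scaleN1r in Fm2_eqN.
have Fm2_e1 := Fm2_cart_neq0 R sym1 irr1 sym2 irr2 conn1 conn2 two1 two2 e1.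
have ratio_i := @ratio_of_case_i_sym R _ _ _ _ irr1 irr2 e1 e2.
have ratio_ii := @ratio_of_case_ii_sym R _ _ _ _ sym1 irr1 sym2 irr2 e1 e2.
have cases := cases_of_ratio sym1 irr1 sym2 irr2 conn1 conn2 two1 two2 ne12.
split; [split | by move/ratio_i/Fm2_eq | by move/ratio_ii/Fm2_eqN].
  case=> [/Fm2_eq | /Fm2_eqN]; apply: cases; by rewrite ?mulrNN mulr1.
by case=> [/ratio_i/Fm2_eq | /ratio_ii/Fm2_eqN]; [left | right].
Qed.
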